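(* (i) For every $\gamma > 1$ there exists a deviation FRLP instance such that $$\gamma \cdot \max_{x \in \bar{X}} \sum_{q \in Q} v^{\mathrm{agg}}_q(x) \le \max_{x \in \bar{X}} \sum_{q \in Q} v^{\mathrm{disagg}}_q(x).$$ (ii) For every $\gamma > 1$ there exists a deviation FRLP instance such that $$\gamma \cdot \max_{x \in \bar{X}} \sum_{q \in Q} v^{\mathrm{tight}}_q(x) \le \max_{x \in \bar{X}} \sum_{q \in Q} v^{\mathrm{agg}}_q(x).$$
   Context: A deviation FRLP instance consists of: a finite undirected graph $G=(N,A)$ with edge lengths $\ell_e>0$; a travel range $d>0$ with $\ell_e \le d$ for every edge; a finite set $Q$ of demands, each $q \in Q$ with a flow volume $f_q \ge 0$ and a finite nonempty set $R_q$ of paths; and a polytope $\bar{X} \subseteq [0,1]^{|N|}$ (the LP relaxation of the set of feasible station placements). A path is a sequence $r=(v_0,\dots,v_m)$, $m\ge 1$, of nodes with consecutive nodes joined by an edge (nodes may repeat). For $x \in \{0,1\}^N$ ($x_j=1$ meaning a charging station at node $j$), $r$ is repeatedly traversable under $x$ if, letting $W=(v_0,\dots,v_m,v_{m-1},\dots,v_0)$ be the round trip along $r$, at least one node of $r$ has $x_j=1$ and, in the infinite periodic repetition of $W$, the distance travelled between any two consecutive visits to nodes with a station is at most $d$. For each $q$ and $r \in R_q$, $\mathcal{D}_{q,r}\subseteq 2^N$ is a family of node sets such that for every $x \in \{0,1\}^N$: $r$ is repeatedly traversable under $x$ iff $\sum_{j\in S} x_j \ge 1$ for all $S \in \mathcal{D}_{q,r}$.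 Let $\mathcal{C}_q = \{ \bigcup_{r \in R_q} S_r : S_r \in \mathcal{D}_{q,r} \text{ for each } r\}$. For $x \in [0,1]^{|N|}$: $v^{\mathrm{disagg}}_q(x) = \max\{ \sum_{r \in R_q} f_q z_r : z \in [0,1]^{|R_q|},\ \sum_{r} z_r \le 1,\ \sum_{j \in S} x_j \ge z_r \ \forall r \in R_q, S \in \mathcal{D}_{q,r}\}$; $v^{\mathrm{agg}}_q(x) = \max\{ f_q y : y \in [0,1],\ \sum_{j \in S} x_j \ge y \ \forall S \in \mathcal{C}_q\}$; $K_q$ is the set of concave functions $v$ on $[0,1]^{|N|}$ agreeing with $v^{\mathrm{agg}}_q$ on $\{0,1\}^{|N|}$, and $v^{\mathrm{tight}}_q(x) = \inf_{v \in K_q} v(x)$. *)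

From HB Require Import structures.
From mathcomp Require Import all_boot all_order all_algebra.
From mathcomp Require Import boolp classical_sets reals.
Unset Printing Implicit Defensive.
Import Order.TTheory GRing.Theory Num.Theory.
Local Open Scope classical_set_scope.
Local Open Scope ring_scope.

Section Deviation.
Variable R : realType.

(* Paths are node sequences; R_q is the (duplicate-free) list [paths q];
   D q r is the family D_{q,r}; the polytope is {x in [0,1]^N | A x <= b}. *)
Record instance := Instance {
  n : nat;
  adj : rel 'I_n;
  len : 'I_n -> 'I_n -> R;
  rng : R;
  nQ : nat;
  flow : 'I_nQ -> R;
  paths : 'I_nQ -> seq (seq 'I_n);
  D : 'I_nQ -> seq 'I_n -> {set {set 'I_n}};
  mcon : nat;
  A : 'I_mcon -> 'I_n -> R;
  b : 'I_mcon -> R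
}.

Variable I : instance.

Definition cube (x : 'I_(n I) -> R) := forall j, 0 <= x j <= 1.
Definition binary (x : 'I_(n I) -> R) := forall j, x j = 0 \/ x j = 1.

Definition is_path (r : seq 'I_(n I)) : bool :=
  if r is v0 :: s then (0 < size s)%N && path (adj I) v0 s else false.

(* one period of the infinite repetition of the round trip
   W = (v_0,...,v_m,v_{m-1},...,v_0): (v_0,...,v_m,v_{m-1},...,v_1) *)
Definition roundtrip (r : seq 'I_(n I)) : seq 'I_(n I) :=
  r ++ take (size r - 2) (behead (rev r)).

Definition walk (v0 : 'I_(n I)) (r : seq 'I_(n I)) (k : nat) : 'I_(n I) :=
  nth v0 (roundtrip r) (k %% size (roundtrip r)).

Definition rep_traversable (r : seq 'I_(n I)) (x : 'I_(n I) -> R) : Prop :=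
  match r with
  | [::] => False
  | v0 :: _ =>
    (exists j, j \in r /\ x j = 1) /\
    forall k k' : nat, (k < k')%N ->
      x (walk v0 r k) = 1 -> x (walk v0 r k') = 1 ->
      (forall i, (k < i < k')%N -> x (walk v0 r i) <> 1) ->
      \sum_(k <= i < k') len I (walk v0 r i) (walk v0 r i.+1) <= rng I
  end.

Definition Xbar (x : 'I_(n I) -> R) : Prop :=
  cube x /\ forall i, \sum_j A I i j * x j <= b I i.

Definition deviation_instance : Prop :=
  (forall u v, adj I u v = adj I v u) /\
  (forall u, ~~ adj I u u) /\
  (forall u v, adj I u v -> [/\ len I u v = len I v u, 0 < len I u v & len I u v <= rng I]) /\
  0 < rng I /\
  (forall q, 0 <= flow I q) /\
  (forall q, [/\ paths I q != [::], uniq (paths I q) & all is_path (paths I q)]) /\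
  (forall q r, r \in paths I q -> forall x, binary x ->
      (rep_traversable r x <-> forall S, S \in D I q r -> 1 <= \sum_(j in S) x j)) /\
  (exists x, Xbar x).

Definition v_disagg (q : 'I_(nQ I)) (x : 'I_(n I) -> R) : R :=
  sup [set \sum_(r <- paths I q) flow I q * z r | z in
       [set z : seq 'I_(n I) -> R |
          (forall r, r \in paths I q -> 0 <= z r <= 1) /\
          \sum_(r <- paths I q) z r <= 1 /\
          (forall r S, r \in paths I q -> S \in D I q r -> z r <= \sum_(j in S) x j)]].

Definition inC (q : 'I_(nQ I)) (S : {set 'I_(n I)}) : Prop :=
  exists g : seq 'I_(n I) -> {set 'I_(n I)},
    (forall r, r \in paths I q -> g r \in D I q r) /\
    S = \bigcup_(r <- paths I q) g r.

Definition v_agg (q : 'I_(nQ I)) (x : 'I_(n I) -> R) : R :=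
  sup [set flow I q * y | y in
       [set y : R | 0 <= y <= 1 /\ forall S, inC q S -> y <= \sum_(j in S) x j]].

Definition concave_on_cube (v : ('I_(n I) -> R) -> R) : Prop :=
  forall x y, cube x -> cube y -> forall t : R, 0 <= t <= 1 ->
    t * v x + (1 - t) * v y <= v (fun j => t * x j + (1 - t) * y j).

Definition K (q : 'I_(nQ I)) : set (('I_(n I) -> R) -> R) :=
  [set v | concave_on_cube v /\ forall x, binary x -> v x = v_agg q x].

Definition v_tight (q : 'I_(nQ I)) (x : 'I_(n I) -> R) : R :=
  inf [set v x | v in K q].

Definition obj (v : 'I_(nQ I) -> ('I_(n I) -> R) -> R) : set R :=
  [set \sum_q v q x | x in Xbar].

End Deviation.

Definition is_max {R : realType} (E : set R) (m : R) : Prop :=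
  E m /\ forall y, E y -> y <= m.

From mathcomp Require Import all_boot all_order all_algebra.
From mathcomp Require Import boolp classical_sets reals.
From mathcomp Require Import zify.

(* Both instances live on a complete graph whose edges are as long as the travel range, so a
   path is repeatedly traversable exactly when every node on it has a station, i.e.
   D_{q,r} = {{j} | j in r}.  There is one demand of flow 1 and the polytope is a single point
   x = th, so each maximum is the value at that point.
   (i) On m nodes, with the complements of singletons as paths and th = 1/m, every set of C_q
   contains one of two fixed nodes, so v_agg <= 2/m, while z_r = 1/m is feasible for the
   disaggregated problem, so v_disagg >= 1.
   (ii) On 2s nodes, with all sets of at least s nodes as paths and th = 1/(2s), a set of C_q
   meets every path, hence has more than s nodes, so v_agg >= (s+1)/(2s); on the other hand
   min(sum_j x_j / s, min_{|T|>s} sum_{j in T} x_j, 1) is concave and agrees with v_agg on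
   binary points, so v_tight <= 1/s. *)
Set Implicit Arguments.
Unset Strict Implicit.
Unset Printing Implicit Defensive.
Import Order.TTheory GRing.Theory Num.Theory.
Local Open Scope ring_scope.

Lemma roundtrip_subset (T : eqType) (r : seq T) k :
  {subset r ++ take k (behead (rev r)) <= r}.
Proof.
by move=> j; rewrite mem_cat => /orP[//|/mem_take/mem_behead]; rewrite mem_rev.
Qed.

Lemma in_bigcup_seq (I : Type) (T : finType) (s : seq I) (F : I -> {set T}) x :
  (x \in \bigcup_(i <- s) F i) = has (fun i => x \in F i) s.
Proof. by elim: s => [|i s IH]; rewrite ?big_nil ?big_cons ?inE //= IH. Qed.

Lemma consecutive_around (P : pred nat) a p c :
  (a < p < c)%N -> P a -> P c -> ~~ P p ->
  exists k k', [/\ (k < p < k')%N, P k, P k' & forall i, (k < i < k')%N -> ~~ P i].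
Proof.
move=> /andP[ap pc] Pa Pc nPp.
have before : exists i, (i < p)%N && P i by exists a; rewrite ap.
have after : exists i, (p < i)%N && P i by exists c; rewrite pc.
have before_le i : (i < p)%N && P i -> (i <= p)%N by case/andP => /ltnW.
have [k /andP[kp Pk] kmax] := ex_maxnP before before_le.
have [k' /andP[pk' Pk'] kmin] := ex_minnP after.
exists k, k'; split => //; first by rewrite kp.
move=> i /andP[ki ik']; apply/negP => Pi.
case: (ltngtP i p) => [ip|pi|ip].
- by have := kmax i; rewrite ip Pi => /(_ isT); lia.
- by have := kmin i; rewrite pi Pi => /(_ isT); lia.
- by move: nPp; rewrite -ip Pi.
Qed.

Lemma ler_term_sum (R : numDomainType) (T : finType) (S : {pred T}) (x : T -> R) j :
  (forall i, 0 <= x i) -> j \in S -> x j <= \sum_(i in S) x i.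
Proof. by move=> x0 jS; rewrite (bigD1 j) //= lerDl sumr_ge0. Qed.

Section Walk.
Variables (R : realType) (I : instance R).

Lemma size_roundtrip r : (size r <= size (roundtrip R I r))%N.
Proof. by rewrite size_cat leq_addr. Qed.

Lemma walk_mem v0 r k : r != [::] -> walk R I v0 r k \in r.
Proof.
move=> r0; apply: roundtrip_subset; apply: mem_nth; rewrite ltn_pmod //.
by apply: leq_trans (size_roundtrip r); rewrite lt0n size_eq0.
Qed.

Lemma walk_index v0 r j : j \in r -> walk R I v0 r (index j r) = j.
Proof.
move=> jr; have jr' : (index j r < size r)%N by rewrite index_mem.
rewrite /walk modn_small; last exact: leq_trans jr' (size_roundtrip r).
by rewrite nth_cat jr' nth_index.
Qed.

Lemma walkD_period v0 r k : walk R I v0 r (k + size (roundtrip R I r)) = walk R I v0 r k.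
Proof. by rewrite /walk modnDr. Qed.

End Walk.

Section Concave.
Variables (R : realDomainType) (T : finType).

Definition concave (v : (T -> R) -> R) := forall (x y : T -> R) (t : R), 0 <= t <= 1 ->
  t * v x + (1 - t) * v y <= v (fun j => t * x j + (1 - t) * y j).

Lemma concave_sum (S : {pred T}) : concave (fun y => \sum_(j in S) y j).
Proof. by move=> x y t _; rewrite big_split /= -!mulr_sumr. Qed.

Lemma concave_scale (c : R) v : 0 <= c -> concave v -> concave (fun y => c * v y).
Proof.
move=> c0 cv x y t t01; rewrite mulrCA [_ * (c * _)]mulrCA -mulrDr.
exact: ler_wpM2l (cv x y t t01).
Qed.

Lemma concave_min v w : concave v -> concave w -> concave (fun y => Order.min (v y) (w y)).
Proof.
move=> cv cw x y t /[dup] t01 /andP[t0 t1].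
have t0' : 0 <= 1 - t by rewrite subr_ge0.
rewrite le_min; apply/andP; split.
- apply: le_trans (cv x y t t01).
  by apply: lerD; apply: ler_wpM2l; rewrite // ge_min lexx.
- apply: le_trans (cw x y t t01).
  by apply: lerD; apply: ler_wpM2l; rewrite // ge_min lexx orbT.
Qed.

Lemma concave_bigmin (J : finType) (P : pred J) (v : J -> (T -> R) -> R) :
  (forall i, P i -> concave (v i)) ->
  concave (fun y => \big[Order.min/1]_(i | P i) v i y).
Proof.
move=> cv x y t /[dup] t01 /andP[t0 t1].
have t0' : 0 <= 1 - t by rewrite subr_ge0.
apply: le_bigmin => [|i Pi].
  apply: (@le_trans _ _ (t * 1 + (1 - t) * 1)); last by rewrite !mulr1 addrC subrK.
  by apply: lerD; apply: ler_wpM2l => //; exact: bigmin_le_id.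
apply: le_trans (cv i Pi x y t t01).
by apply: lerD; apply: ler_wpM2l => //; exact: bigmin_le_cond.
Qed.

End Concave.

Section Clique.
Variables (R : realType) (m : nat) (Ps : seq {set 'I_m}) (th : R).

Definition point_constraint (i : 'I_(m + m)) (j : 'I_m) : R :=
  match split i with inl k => (k == j)%:R | inr k => - (k == j)%:R end.

(* The polytope [{x | x <= th, - x <= - th}] is the single point [x = th]. *)
Definition clique_instance : instance R :=
  @Instance R m (fun u v => u != v) (fun _ _ => 1) 1 1 (fun _ => 1)
    (fun _ => map (fun P : {set 'I_m} => enum P) Ps) (fun _ r => [set [set j] | j in r])
    (m + m) point_constraint (fun i => if split i is inl _ then th else - th).

Local Notation I := clique_instance.

Lemma sum_point_constraint i (x : 'I_m -> R) :
  \sum_j point_constraint i j * x j = match split i with inl k => x k | inr k => - x k end.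
Proof.
rewrite /point_constraint; case: (split i) => k.
all: rewrite (bigD1 k) //= eqxx big1 ?addr0 ?mul1r ?mulN1r // => j /negbTE.
all: by rewrite eq_sym => ->; rewrite ?oppr0 mul0r.
Qed.

Lemma rep_traversable_clique r x :
  (1 < size r)%N -> rep_traversable R I r x <-> {in r, forall j, x j = 1}.
Proof.
case: r => [//|v0 s] _; set r := v0 :: s.
have lenE k k' : \sum_(k <= i < k') len R I (walk R I v0 r i) (walk R I v0 r i.+1)
    = (k' - k)%:R by rewrite sumr_const_nat.
split.
- move=> [[j0 [j0r xj0]] consecutive] j jr; apply/eqP; apply: contraT => xj.
  pose P := size (roundtrip R I r).
  have rP : (size r <= P)%N := size_roundtrip r.
  have order : (index j0 r < index j r + P < index j0 r + P + P)%N.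
    have h0 : (index j0 r < size r)%N by rewrite index_mem.
    have h1 : (index j r < size r)%N by rewrite index_mem.
    lia.
  have station_j0 : x (walk R I v0 r (index j0 r)) == 1 by rewrite walk_index // xj0.
  have station_j0' : x (walk R I v0 r (index j0 r + P + P)) == 1.
    by rewrite !walkD_period walk_index // xj0.
  have no_station_j : x (walk R I v0 r (index j r + P)) != 1.
    by rewrite walkD_period walk_index.
  (* The station-free visit of [j] lies between two consecutive station visits,
     which are then at least two unit edges apart. *)
  have [k [k' [/andP[kp pk'] /eqP xk /eqP xk' between]]] :=
    consecutive_around (P := fun i => x (walk R I v0 r i) == 1)
      order station_j0 station_j0' no_station_j.
  have := consecutive k k' (ltn_trans kp pk') xk xk'.
  by rewrite lenE lern1 => /(_ (fun i hi => elimN eqP (between i hi))); lia.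
- move=> stations; split; first by exists v0; rewrite mem_head stations ?mem_head.
  move=> k k' kk' _ _ between; rewrite lenE lern1 leqNgt; apply/negP => gap.
  by apply: (between k.+1); [lia | exact/stations/walk_mem].
Qed.

Lemma D_clique q r x : binary R I x ->
  (forall S, S \in D R I q r -> 1 <= \sum_(j in S) x j) <-> {in r, forall j, x j = 1}.
Proof.
move=> bx; split => [covered j jr | stations _ /imsetP[j jr ->]]; last first.
  by rewrite big_set1 stations.
by have := covered _ (imset_f _ jr); rewrite big_set1; case: (bx j) => ->; rewrite ?ler10.
Qed.

Lemma inC_meets q S :
  inC R I q S -> {in paths R I q, forall r, exists2 j, j \in r & j \in S}.
Proof.
move=> [g [gD ->]] r rq; have /imsetP[j jr gr] := gD r rq; exists j => //.
by rewrite in_bigcup_seq; apply/hasP; exists r; rewrite // gr set11.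
Qed.

Lemma inC_choice q (g : seq 'I_m -> 'I_m) :
  {in paths R I q, forall r, g r \in r} -> inC R I q (\bigcup_(r <- paths R I q) [set g r]).
Proof. by move=> gr; exists (fun r => [set g r]); split => // r /gr; exact: imset_f. Qed.

Lemma v_agg_ge q x y : 0 <= y <= 1 ->
  (forall S, inC R I q S -> y <= \sum_(j in S) x j) -> y <= v_agg R I q x.
Proof.
move=> y01 yC; rewrite -[y]mul1r /v_agg; apply: ub_le_sup; last by exists y.
by exists 1 => _ [y' [/andP[_ y'1] _] <-]; rewrite mul1r.
Qed.

Lemma v_agg_le q x c : (forall j, 0 <= x j) ->
  (forall y, 0 <= y <= 1 -> (forall S, inC R I q S -> y <= \sum_(j in S) x j) -> y <= c) ->
  v_agg R I q x <= c.
Proof.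
move=> x0 ub; apply: ge_sup => [|_ [y [y01 yC] <-]]; last by rewrite mul1r; exact: ub.
exists (1 * 0), 0 => //; split; first by rewrite lexx ler01.
by move=> S _; exact: sumr_ge0.
Qed.

Hypotheses (Ps_neq0 : Ps != [::]) (Ps_uniq : uniq Ps)
  (Ps_card : forall P, P \in Ps -> (1 < #|P|)%N) (th_ge0 : 0 <= th) (th_le1 : th <= 1).

Lemma Xbar_clique x : Xbar R I x <-> x = (fun _ => th).
Proof.
split => [[_ Ax] | ->].
  apply: funext => j; apply/eqP; rewrite eq_le.
  have := Ax (lshift m j); have := Ax (rshift m j).
  by rewrite /= !sum_point_constraint (unsplitK (inl j)) (unsplitK (inr j)) lerN2 => -> ->.
split=> [j|i]; first by rewrite th_ge0 th_le1.
by rewrite /= (sum_point_constraint i (fun _ => th)); case: (split i).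
Qed.

Lemma is_path_clique (P : {set 'I_m}) : (1 < #|P|)%N -> is_path R I (enum P).
Proof.
rewrite cardE; case: (enum P) (enum_uniq P) => [//|v0 s] + s_gt0 /=.
by rewrite -ltnS s_gt0 uniq_pairwise => /pairwise_sorted.
Qed.

Lemma deviation_clique : deviation_instance R I.
Proof.
split; first by move=> u v; rewrite /= eq_sym.
split; first by move=> u; rewrite /= eqxx.
split; first by move=> u v _; rewrite /= ltr01 lexx.
split; first exact: ltr01.
split; first by move=> q; exact: ler01.
split.
  move=> q; split => /=; first by case: (Ps) Ps_neq0.
    rewrite map_inj_in_uniq // => P Q _ _ PQ.
    by rewrite -(set_enum P) -(set_enum Q) PQ.
  by apply/allP => _ /mapP[P PPs ->]; exact/is_path_clique/Ps_card.
split; last by exists (fun _ => th); apply/Xbar_clique.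
move=> q _ /mapP[P PPs ->] x bx; rewrite D_clique // rep_traversable_clique //.
by rewrite -cardE Ps_card.
Qed.

Lemma is_max_clique (v : 'I_1 -> ('I_m -> R) -> R) : is_max (obj R I v) (v ord0 (fun _ => th)).
Proof.
split; first by exists (fun _ => th); [apply/Xbar_clique | rewrite big_ord1].
by move=> _ [x /Xbar_clique -> <-]; rewrite big_ord1.
Qed.

End Clique.

Section Punctured.
Variables (R : realType) (m : nat).
Hypothesis m_gt2 : (2 < m)%N.

Definition punctured_instance : instance R :=
  clique_instance [seq [set~ j] | j <- enum 'I_m] (m%:R^-1 : R).

Local Notation I := punctured_instance.
Local Notation th := (m%:R^-1 : R).
Let a : 'I_m := Ordinal (ltnW (ltnW m_gt2)).
Let b : 'I_m := Ordinal (ltnW m_gt2).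

Lemma punctured_th_gt0 : 0 < th.
Proof. by rewrite invr_gt0 ltr0n; lia. Qed.

Lemma punctured_th_le1 : th <= 1.
Proof. by rewrite invf_le1 ?ltr0n ?ler1n; lia. Qed.

Lemma deviation_punctured : deviation_instance R I.
Proof.
apply: deviation_clique.
- by rewrite -size_eq0 size_map size_enum_ord; lia.
- rewrite map_inj_uniq ?enum_uniq // => u v uv.
  have := congr1 (fun A : {set 'I_m} => v \in A) uv.
  by rewrite !in_setC1 eqxx eq_sym => /negbFE/eqP.
- by move=> _ /mapP[j _ ->]; rewrite cardsC1 card_ord; lia.
- exact/ltW/punctured_th_gt0.
- exact: punctured_th_le1.
Qed.

Lemma is_max_punctured v : is_max (obj R I v) (v ord0 (fun _ => th)).
Proof. exact: is_max_clique _ (ltW punctured_th_gt0) punctured_th_le1 v. Qed.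

Lemma v_agg_punctured_ge : th <= v_agg R I ord0 (fun _ => th).
Proof.
have th_gt0 := punctured_th_gt0.
apply: v_agg_ge => [|S /inC_meets/(_ (enum [set~ a]))[]].
- by rewrite ltW // punctured_th_le1.
- by apply: map_f; apply: map_f; rewrite mem_enum.
- by move=> j _ jS; apply: ler_term_sum jS => _; exact: ltW.
Qed.

Lemma v_agg_punctured_le : v_agg R I ord0 (fun _ => th) <= 2 * th.
Proof.
pose g (r : seq 'I_m) := if a \in r then a else b.
have g_in : {in paths R I ord0, forall r, g r \in r}.
  move=> _ /mapP[_ /mapP[j _ ->] ->]; rewrite /g; case: ifP => // /negbT.
  by rewrite !mem_enum !in_setC1 negbK => /eqP <-.
apply: v_agg_le => [j|y _ /(_ _ (inC_choice g_in)) /le_trans]; first exact/ltW/punctured_th_gt0.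
apply; rewrite sumr_const -[th *+ _]mulr_natl ler_pM2r ?punctured_th_gt0 // ler_nat.
apply: leq_trans (subset_leq_card (_ : _ \subset [set a; b])) _.
  apply/fintype.subsetP => j; rewrite in_bigcup_seq => /hasP[r _].
  by rewrite inE => /eqP ->; rewrite /g !inE; case: ifP; rewrite eqxx ?orbT.
by rewrite cards2; case: (a != b).
Qed.

Lemma v_disagg_punctured_ge : 1 <= v_disagg R I ord0 (fun _ => th).
Proof.
have sum_th : \sum_(r <- paths R I ord0) th = 1.
  rewrite /= !big_map -enumT big_enum /= sumr_const card_ord -[th *+ _]mulr_natl mulfV //.
  by rewrite pnatr_eq0; lia.
rewrite -[X in X <= _]sum_th; under eq_bigr do rewrite -[th]mul1r.
apply: ub_le_sup.
  by exists 1 => _ [z [_ [zs _]] <-]; under eq_bigr do rewrite mul1r.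
exists (fun _ => th) => //; split.
  by move=> r _; rewrite ltW ?punctured_th_gt0 ?punctured_th_le1.
split; first by rewrite sum_th.
by move=> r S _ /imsetP[j _ ->]; rewrite big_set1.
Qed.

Lemma punctured_gap gamma : 0 <= gamma -> 2 * gamma <= m%:R ->
  gamma * v_agg R I ord0 (fun _ => th) <= v_disagg R I ord0 (fun _ => th).
Proof.
move=> gamma_ge0 gamma_le; apply: le_trans v_disagg_punctured_ge.
apply: le_trans (ler_wpM2l gamma_ge0 v_agg_punctured_le) _.
by rewrite mulrA ler_pdivrMr ?ltr0n 1?mulrC ?mul1r //; lia.
Qed.

End Punctured.

Section Threshold.
Variables (R : realType) (s : nat).
Hypothesis s_gt1 : (1 < s)%N.

Definition threshold_instance : instance R :=
  clique_instance (enum [set P : {set 'I_(s + s)} | (s <= #|P|)%N]) ((s + s)%:R^-1 : R).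

Local Notation m := (s + s)%N.
Local Notation I := threshold_instance.
Local Notation th := ((s + s)%:R^-1 : R).

Lemma threshold_th_gt0 : 0 < th.
Proof. by rewrite invr_gt0 ltr0n; lia. Qed.

Lemma threshold_th_le1 : th <= 1.
Proof. by rewrite invf_le1 ?ltr0n ?ler1n; lia. Qed.

Lemma threshold_path (P : {set 'I_m}) : (s <= #|P|)%N -> enum P \in paths R I ord0.
Proof. by move=> sP; apply: map_f; rewrite mem_enum inE. Qed.

Lemma deviation_threshold : deviation_instance R I.
Proof.
apply: deviation_clique.
- apply/eqP => /(congr1 (fun l => [set: 'I_m] \in l)).
  by rewrite mem_enum inE cardsT card_ord leq_addr.
- exact: enum_uniq.
- by move=> P; rewrite mem_enum inE; lia.
- exact/ltW/threshold_th_gt0.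
- exact: threshold_th_le1.
Qed.

Lemma is_max_threshold v : is_max (obj R I v) (v ord0 (fun _ => th)).
Proof. exact: is_max_clique _ (ltW threshold_th_gt0) threshold_th_le1 v. Qed.

Lemma card_threshold_compl (A : {set 'I_m}) : (#|A| + #|~: A| = s + s)%N.
Proof. by rewrite cardsC card_ord. Qed.

Section Binary.
Variable u : 'I_m -> R.
Hypothesis u_bin : binary R I u.
Local Notation U := [set j | u j == 1].

Lemma sum_binary (S : {set 'I_m}) : \sum_(j in S) u j = #|S :&: U|%:R.
Proof.
rewrite (eq_bigr (fun j => if j \in U then 1 else 0)) => [|j _]; last first.
  by rewrite inE; case: (u_bin j) => ->; rewrite ?eqxx // eq_sym oner_eq0.
rewrite -big_mkcondr sumr_const; congr (_ *+ _); apply: eq_card => j.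
by rewrite finset.in_setI.
Qed.

(* Choosing on every path a node without a station. *)
Lemma threshold_inC_avoiding : (#|U| < s)%N -> exists2 S, inC R I ord0 S & #|S :&: U| = 0%N.
Proof.
move=> sU; pose j0 : 'I_m := Ordinal (leq_trans (ltnW s_gt1) (leq_addr s s)).
pose g (r : seq 'I_m) := odflt j0 [pick j in r | j \notin U].
have g_in : {in paths R I ord0, forall r, (g r \in r) && (g r \notin U)}.
  move=> r /mapP[P]; rewrite mem_enum inE => sP ->; rewrite /g.
  case: pickP => [j /andP[-> ->] // | noj].
  have /fintype.subsetPn [j jP jU] : ~~ (P \subset U).
    by apply: contraTN sU => /subset_leq_card; rewrite -leqNgt; apply: leq_trans.
  by have := noj j; rewrite mem_enum jP jU.
exists (\bigcup_(r <- paths R I ord0) [set g r]).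
  by apply: inC_choice => r /g_in /andP[].
apply/eqP; rewrite cards_eq0; apply/eqP/setP => j.
rewrite !inE in_bigcup_seq; apply/negP => /andP[/hasP[r rP]].
by rewrite inE => /eqP ->; have /andP[_] := g_in r rP; rewrite inE => /negbTE ->.
Qed.

Lemma v_agg_threshold_binary : v_agg R I ord0 u = (s <= #|U|)%:R.
Proof.
have u_ge0 j : 0 <= u j by case: (u_bin j) => ->.
apply/le_anti; case: leqP => sU /=.
- rewrite (v_agg_le u_ge0) => [|y /andP[_ //]].
  apply: v_agg_ge => [|S /inC_meets /(_ _ (threshold_path sU)) [j]]; first by rewrite ler01 lexx.
  rewrite mem_enum sum_binary ler1n card_gt0 => jU jS.
  by apply/set0Pn; exists j; rewrite inE jS.
- have [S SC SU] := threshold_inC_avoiding sU.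
  rewrite (v_agg_le u_ge0) => [|y _ /(_ _ SC)]; last by rewrite sum_binary SU.
  by apply: v_agg_ge; rewrite ?lexx ?ler01 // => T _; rewrite sum_binary.
Qed.

End Binary.

Definition threshold_majorant (y : 'I_m -> R) : R :=
  Order.min (s%:R^-1 * \sum_j y j)
            (\big[Order.min/1]_(T : {set 'I_m} | (s < #|T|)%N) \sum_(j in T) y j).

Lemma concave_threshold_majorant : concave threshold_majorant.
Proof.
apply: concave_min; first by apply: concave_scale (concave_sum predT); rewrite invr_ge0.
by apply: concave_bigmin => T _; exact: concave_sum.
Qed.

Lemma threshold_majorant_binary (u : 'I_m -> R) : binary R I u ->
  threshold_majorant u = (s <= #|[set j | u j == 1]|)%:R.
Proof.
move=> u_bin; set U := [set j | u j == 1].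
have sumT : \sum_j u j = #|U|%:R.
  by rewrite -(finset.setTI U) -sum_binary //; apply: eq_bigl => j; rewrite inE.
have s_gt0 : (0 : R) < s%:R by rewrite ltr0n; lia.
rewrite /threshold_majorant sumT; apply/le_anti; case: leqP => sU /=.
- rewrite ge_min bigmin_le_id orbT /= le_min ler_pdivlMl // mulr1 ler_nat sU /=.
  apply: le_bigmin => // T sT; rewrite sum_binary // ler1n card_gt0; apply/set0Pn.
  have /fintype.subsetPn[j jT] : ~~ (T \subset ~: U).
    apply: contraTN sT => /subset_leq_card TU; rewrite -leqNgt.
    by apply: leq_trans TU _; rewrite -(leq_add2l #|U|) card_threshold_compl leq_add2r.
  by rewrite finset.in_setC negbK => jU; exists j; rewrite finset.in_setI jT.
- apply/andP; split.
    rewrite ge_min; apply/orP; right; apply: (bigmin_inf (~: U)) => //.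
      by rewrite -(ltn_add2l #|U|) card_threshold_compl ltn_add2r.
    by rewrite sum_binary // finset.setIC finset.setICr cards0.
  rewrite le_min mulr_ge0 ?invr_ge0 ?ler0n //=.
  by apply: le_bigmin => // T _; rewrite sum_binary // ler0n.
Qed.

Lemma threshold_majorant_in_K : K R I ord0 threshold_majorant.
Proof.
split=> [x y _ _|u u_bin]; first exact: concave_threshold_majorant.
by rewrite threshold_majorant_binary // v_agg_threshold_binary.
Qed.

(* Concavity along the segment from the all-zero to the all-one placement. *)
Lemma K_threshold_ge v : K R I ord0 v -> th <= v (fun _ => th).
Proof.
move=> [v_concave v_bin].
have bin1 : binary R I (fun _ => 1) by right.
have bin0 : binary R I (fun _ => 0) by left.
have := v_concave (fun _ => 1) (fun _ => 0) _ _ th.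
rewrite v_bin // v_bin // !v_agg_threshold_binary // mulr1 mulr0 addr0.
have -> : #|[set j : 'I_m | (1 : R) == 1]| = (s + s)%N.
  by rewrite -[RHS](card_ord (s + s)) -cardsT; apply: eq_card => j; rewrite !inE eqxx.
have -> : #|[set j : 'I_m | (0 : R) == 1]| = 0%N.
  by apply/eqP; rewrite cards_eq0; apply/eqP/setP => j; rewrite !inE eq_sym oner_eq0.
rewrite leq_addr leqNgt (ltnW s_gt1) /= mulr1n mulr0n mulr1 mulr0 addr0.
by apply=> [j|j|]; rewrite ?ler01 ?lexx // ltW ?threshold_th_gt0 ?threshold_th_le1.
Qed.

Lemma v_tight_threshold_ge : th <= v_tight R I ord0 (fun _ => th).
Proof.
apply: lb_le_inf => [|_ [v Kv <-]]; last exact: K_threshold_ge.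
exists (threshold_majorant (fun _ => th)), threshold_majorant => //.
exact: threshold_majorant_in_K.
Qed.

Lemma v_tight_threshold_le : v_tight R I ord0 (fun _ => th) <= s%:R^-1.
Proof.
have lb : has_lbound [set v (fun _ => th) | v in K R I ord0] .
  by exists th => _ [v Kv <-]; exact: K_threshold_ge.
apply: le_trans (ge_inf lb (ex_intro2 _ _ _ threshold_majorant_in_K erefl)) _.
rewrite ge_min; apply/orP; left.
rewrite sumr_const card_ord -[th *+ _]mulr_natl mulfV ?mulr1 //.
by rewrite pnatr_eq0; lia.
Qed.

Lemma v_agg_threshold_ge : s.+1%:R * th <= v_agg R I ord0 (fun _ => th).
Proof.
apply: v_agg_ge => [|S SC].
  have m_gt0 : (0 : R) < (s + s)%:R by rewrite ltr0n; lia.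
  by rewrite mulr_ge0 ?invr_ge0 ?ler0n //= ler_pdivrMr // mul1r ler_nat; lia.
rewrite sumr_const -[th *+ _]mulr_natl ler_pM2r ?threshold_th_gt0 // ler_nat.
rewrite leqNgt ltnS; apply/negP => small.
have sC : (s <= #|~: S|)%N by rewrite -(leq_add2l #|S|) card_threshold_compl leq_add2r.
have [j] := inC_meets SC (threshold_path sC).
by rewrite mem_enum inE => /negbTE ->.
Qed.

Lemma threshold_gap gamma : 0 <= gamma -> 2 * gamma <= s.+1%:R ->
  gamma * v_tight R I ord0 (fun _ => th) <= v_agg R I ord0 (fun _ => th).
Proof.
move=> gamma_ge0 gamma_le; apply: le_trans v_agg_threshold_ge.
apply: le_trans (ler_wpM2l gamma_ge0 v_tight_threshold_le) _.
have -> : ((s + s)%:R : R) = 2 * s%:R by rewrite mulr_natl mulr2n natrD.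
rewrite invfM mulrA ler_pM2r ?invr_gt0 ?ltr0n; last by lia.
by rewrite ler_pdivlMr // mulrC.
Qed.

End Threshold.

Theorem proposition4 (R : realType) :
  (forall gamma : R, 1 < gamma ->
     exists I : instance R, deviation_instance R I /\
       exists m_agg m_disagg : R,
         [/\ is_max (obj R I (v_agg R I)) m_agg,
             is_max (obj R I (v_disagg R I)) m_disagg,
             0 < m_agg &
             gamma * m_agg <= m_disagg]) /\
  (forall gamma : R, 1 < gamma ->
     exists I : instance R, deviation_instance R I /\
       exists m_tight m_agg : R,
         [/\ is_max (obj R I (v_tight R I)) m_tight,
             is_max (obj R I (v_agg R I)) m_agg,
             0 < m_tight &
             gamma * m_tight <= m_agg]).
Proof.
have large (gamma : R) : 1 < gamma -> 0 <= gamma /\ exists N : nat, 2 * gamma <= N.+3%:R.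
  move=> gamma_gt1; have gamma_ge0 := ltW (lt_trans ltr01 gamma_gt1); split => //.
  exists (Num.Def.archi_bound (2 * gamma)); apply/ltW/(lt_le_trans (archi_boundP _)).
    by rewrite mulr_ge0.
  by rewrite ler_nat; lia.
split=> gamma /large[gamma_ge0 [N gammaN]].
- have m_gt2 : (2 < N.+3)%N by [].
  exists (punctured_instance R N.+3); split; first exact: deviation_punctured.
  do 2 eexists; split; [exact: is_max_punctured | exact: is_max_punctured | |].
  + exact: lt_le_trans (punctured_th_gt0 R m_gt2) (v_agg_punctured_ge R m_gt2).
  + exact: punctured_gap.
- have s_gt1 : (1 < N.+2)%N by [].
  exists (threshold_instance R N.+2); split; first exact: deviation_threshold.
  do 2 eexists; split; [exact: is_max_threshold | exact: is_max_threshold | |].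
  + exact: lt_le_trans (threshold_th_gt0 R s_gt1) (v_tight_threshold_ge R s_gt1).
  + exact: threshold_gap.
Qed.
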